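(* For all non-negative integers $k$ and $n$, every weak embedding $f$ of $L_2(k)$ into $L_2(n)$ is distance-preserving: for all $x,y\in L_2(k)$, the distance between $x$ and $y$ in the Hasse diagram of $L_2(k)$ equals the distance between $f(x)$ and $f(y)$ in the Hasse diagram of $L_2(n)$.
   Context: $B_m$ denotes the Boolean lattice of all subsets of $\{1,\dots,m\}$ ordered by inclusion; its $j$-th level is the family of $j$-element subsets. $L_2(m)$ denotes the subposet of $B_m$ induced by the union of its two middle levels, namely levels $\lfloor (m-1)/2\rfloor$ and $\lfloor (m+1)/2\rfloor$. An injective map $f$ from a poset $P$ to a poset $Q$ is a weak embedding if $p\le q$ implies $f(p)\le f(q)$. The Hasse diagram of a poset is the graph on its elements in which $p,q$ are adjacent iff one covers the other (they are comparable and no element lies strictly between them); distance means graph distance in the Hasse diagram. *)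

From mathcomp Require Import all_boot.
Set Implicit Arguments. Unset Strict Implicit. Unset Printing Implicit Defensive.

(* B_m = subsets of 'I_m (i.e. of {1..m}, reindexed to {0..m-1}).  For m = 0 the
   truncated nat value (0-1)./2 = 0 differs from floor(-1/2) = -1, but level
   -1 is empty and level 0 is already included, so the element set agrees. *)
Definition lowlev (m : nat) : nat := (m - 1)./2.
Definition highlev (m : nat) : nat := (m + 1)./2.

Definition inL2 (m : nat) (A : {set 'I_m}) : bool :=
  (#|A| == lowlev m) || (#|A| == highlev m).

Definition L2 (m : nat) := {A : {set 'I_m} | inL2 A}.

Definition L2le (m : nat) (x y : L2 m) : bool := val x \subset val y.
Definition L2lt (m : nat) (x y : L2 m) : bool := val x \proper val y.

Definition L2cover (m : nat) (x y : L2 m) : Prop :=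
  L2lt x y /\ ~ (exists z : L2 m, L2lt x z /\ L2lt z y).

Definition L2adj (m : nat) (x y : L2 m) : Prop := L2cover x y \/ L2cover y x.

Fixpoint L2walk (m : nat) (d : nat) (x y : L2 m) : Prop :=
  match d with
  | 0 => x = y
  | d'.+1 => exists z : L2 m, L2adj x z /\ L2walk d' z y
  end.

Definition L2dist_is (m : nat) (x y : L2 m) (d : nat) : Prop :=
  L2walk d x y /\ forall d', d' < d -> ~ L2walk d' x y.

Definition weak_embedding (k n : nat) (f : L2 k -> L2 n) : Prop :=
  injective f /\ forall x y : L2 k, L2le x y -> L2le (f x) (f y).

From mathcomp Require Import all_boot zify.
Set Implicit Arguments. Unset Strict Implicit. Unset Printing Implicit Defensive.

(* The Hasse distance in L_2(m) is the size of the symmetric difference: every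
   cover adds or removes one element, and from any x != z one can step from z to
   a neighbour closer to x.  A weak embedding maps covers to covers and shifts
   levels uniformly.  Distance preservation is then proved by induction on
   d(x, y): pick a neighbour z of y closer to x.  The neighbours of z closer to x
   number |x \ z| or |z \ x| according to the level of z, which are fixed by
   d(x, z) and the level shift; so f maps them onto the neighbours of f z closer
   to f x, and f y, not being the image of one of them, lies farther from f x
   than f z does. *)

Section SetDist.
Variable T : finType.
Implicit Types A B W X Z : {set T}.

Definition setdist A B := #|A :\: B| + #|B :\: A|.

Lemma setdistC A B : setdist A B = setdist B A.
Proof. by rewrite /setdist addnC. Qed.

Lemma setdist_eq0 A B : (setdist A B == 0) = (A == B).
Proof. by rewrite addn_eq0 !cards_eq0 !setD_eq0 eqEsubset. Qed.

Lemma setdistxx A : setdist A A = 0.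
Proof. by apply/eqP; rewrite setdist_eq0. Qed.

Lemma setdist_cardD A B : 2 * #|A :\: B| + #|B| = setdist A B + #|A|.
Proof. by rewrite /setdist; have := cardsID A B; have := cardsID B A; rewrite setIC; lia. Qed.

Lemma setdistU1 X Z a : a \notin Z ->
  setdist X (a |: Z) + (a \in X).*2 = (setdist X Z).+1.
Proof.
move=> aZ; rewrite /setdist (cardsD1 a (X :\: Z)) !inE (negPf aZ) /=.
have -> : X :\: (a |: Z) = (X :\: Z) :\ a.
  by apply/setP => b; rewrite !inE negb_or andbA andbAC.
have [aX | aX] := boolP (a \in X).
  have -> : (a |: Z) :\: X = Z :\: X.
    by apply/setP => b; rewrite !inE; case: eqVneq => // ->; rewrite aX (negPf aZ).
  lia.
have -> : (a |: Z) :\: X = a |: (Z :\: X) by rewrite setDUl (setDidPl _) // disjoints1.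
rewrite cardsU1 !inE (negPf aX) (negPf aZ) /=; lia.
Qed.

Lemma ltn_setdistU1 X Z a : a \notin Z ->
  (setdist X (a |: Z) < setdist X Z) = (a \in X).
Proof. by move/(setdistU1 X); case: (a \in X) => /=; lia. Qed.

Lemma ltn_setdistU1r X Z a : a \notin Z ->
  (setdist X Z < setdist X (a |: Z)) = (a \notin X).
Proof. by move/(setdistU1 X); case: (a \in X) => /=; lia. Qed.

Lemma proper_cardS_setU1 Z W : Z \proper W -> #|W| = #|Z|.+1 ->
  exists2 a, a \notin Z & W = a |: Z.
Proof.
move=> ZW cardW; have /set0Pn [a] : W :\: Z != set0.
  by rewrite setD_eq0; case/andP: ZW.
rewrite inE => /andP [aZ aW]; exists a => //; apply/esym/eqP.
by rewrite eqEcard subUset sub1set aW (proper_sub ZW) cardsU1 aZ cardW /= add1n.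
Qed.

Lemma setdist_proper_cardS X Z W : Z \proper W -> #|W| = #|Z|.+1 ->
  setdist X W = (setdist X Z).+1 \/ (setdist X W).+1 = setdist X Z.
Proof.
move=> ZW /(proper_cardS_setU1 ZW) [a aZ ->].
by have := setdistU1 X aZ; case: (a \in X) => /=; lia.
Qed.
End SetDist.

Section L2.
Variable m : nat.
Implicit Types (x y z w : L2 m) (X : {set 'I_m}).

Lemma highlevE : highlev m = lowlev m + (0 < m).
Proof. by rewrite /lowlev /highlev; case: m => [|m'] //=; rewrite subn1 addn1 /= addn1. Qed.

Lemma highlevS : 0 < m -> highlev m = (lowlev m).+1.
Proof. by move=> m0; rewrite highlevE m0 addn1. Qed.

Lemma lowlev_lt : 0 < m -> lowlev m < m.
Proof.
rewrite /lowlev; case: m => [|m'] //= _; rewrite subn1 /=.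
by have := odd_double_half m'; rewrite -addnn; lia.
Qed.

Lemma L2_card x : #|val x| = lowlev m \/ #|val x| = highlev m.
Proof. by case: x => A /= /orP [] /eqP ->; [left | right]. Qed.

Lemma L2_proper_card x y : val x \proper val y ->
  [/\ 0 < m, #|val x| = lowlev m & #|val y| = highlev m].
Proof.
move/proper_card; have := L2_card x; have := L2_card y; rewrite highlevE.
by case: (0 < m) => /= cy cx lt; [split; lia | exfalso; lia].
Qed.

Lemma L2coverE x y : L2cover x y <-> val x \proper val y.
Proof.
split=> [[] // | xy]; split=> // -[z [/L2_proper_card [_ _ cz] /L2_proper_card [m0 cz' _]]].
by move: cz cz'; rewrite (highlevS m0); lia.
Qed.

Definition L2adjb x y := (val x \proper val y) || (val y \proper val x).

Lemma L2adjP x y : reflect (L2adj x y) (L2adjb x y).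
Proof. by apply: (iffP orP); rewrite /L2adj !L2coverE. Qed.

Lemma L2adjbC x y : L2adjb x y = L2adjb y x.
Proof. exact: orbC. Qed.

Lemma L2adj_setdist X x y : L2adjb x y ->
  setdist X (val y) = (setdist X (val x)).+1 \/ (setdist X (val y)).+1 = setdist X (val x).
Proof.
case/orP=> /[dup] /L2_proper_card [m0 cx cy] pr;
  have := setdist_proper_cardS X pr; rewrite cx cy (highlevS m0) => /(_ erefl); lia.
Qed.

Definition L2closer X z : {set L2 m} :=
  [set w | L2adjb z w & setdist X (val w) < setdist X (val z)].

Lemma L2closer_low X z : #|val z| = lowlev m -> 0 < m ->
  val @: L2closer X z = [set a |: val z | a in X :\: val z].
Proof.
move=> cz m0; apply/setP => W; apply/imsetP/imsetP.
- case=> w; rewrite inE => /andP [/orP [zw | wz] closer] ->.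
    have [_ _ cw] := L2_proper_card zw.
    have [a az wE] : exists2 a, a \notin val z & val w = a |: val z.
      by apply: proper_cardS_setU1; rewrite // cz cw (highlevS m0).
    by exists a; rewrite // inE az -(ltn_setdistU1 X az) -wE.
  by have [_ cw _] := L2_proper_card wz; move/proper_card: wz; rewrite cz cw ltnn.
- case=> a; rewrite inE => /andP [az aX] ->.
  have aZL : inL2 (a |: val z) by rewrite /inL2 cardsU1 az cz (highlevS m0) eqxx orbT.
  exists (Sub _ aZL : L2 m) => //; rewrite inE /L2adjb /= ltn_setdistU1 // aX andbT.
  by rewrite properEcard subsetUr cardsU1 az ltnSn.
Qed.

Lemma L2closer_high X z : #|val z| = highlev m -> 0 < m ->
  val @: L2closer X z = [set val z :\ a | a in val z :\: X].
Proof.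
move=> cz m0; apply/setP => W; apply/imsetP/imsetP.
- case=> w; rewrite inE => /andP [/orP [zw | wz] closer] ->.
    have [_ cz' _] := L2_proper_card zw.
    by move: cz cz'; rewrite (highlevS m0); lia.
  have [_ cw _] := L2_proper_card wz.
  have [a aw zE] : exists2 a, a \notin val w & val z = a |: val w.
    by apply: proper_cardS_setU1; rewrite // cz cw (highlevS m0).
  exists a; last by rewrite zE setU1K.
  by rewrite inE zE setU11 andbT -(ltn_setdistU1r X aw) -zE.
- case=> a; rewrite inE => /andP [aX az] ->.
  have azL : inL2 (val z :\ a).
    rewrite (highlevS m0) (cardsD1 a) az add1n in cz.
    by apply/orP; left; case: cz => ->.
  exists (Sub _ azL : L2 m) => //; rewrite inE /L2adjb /= properD1 // orbT /=.
  by rewrite -{2}(setD1K az) ltn_setdistU1r // !inE eqxx.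
Qed.

Lemma card_L2closer X z : 0 < m ->
  #|L2closer X z| = if #|val z| == lowlev m then #|X :\: val z| else #|val z :\: X|.
Proof.
move=> m0; rewrite -(card_imset _ val_inj); case: (L2_card z) => cz.
  rewrite cz eqxx L2closer_low // card_in_imset // => a b.
  rewrite !inE => /andP [az _] _ ab; apply/eqP.
  by have := setU11 a (val z); rewrite ab !inE (negPf az) orbF.
rewrite cz (highlevS m0) (gtn_eqF (ltnSn _)) L2closer_high //.
rewrite card_in_imset // => a b; rewrite !inE => /andP [_ az] /andP [_ bz] ab.
apply/eqP; apply: contraT => ab_neq; have : a \in val z :\ b by rewrite !inE ab_neq az.
by rewrite -ab !inE eqxx.
Qed.

Lemma L2_neq_pos x y : x != y -> 0 < m.
Proof.
case: (posnP m) => // m0; case/negP; apply/eqP/val_inj/setP => i.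
by exfalso; have := ltn_ord i; lia.
Qed.

Lemma exists_L2closer x z : x != z -> exists w, w \in L2closer (val x) z.
Proof.
move=> xz; have m0 := L2_neq_pos xz; apply/set0Pn; rewrite -card_gt0 card_L2closer //.
have := L2_card x; have := L2_card z; rewrite (highlevS m0).
case: ifP => [/eqP | /negbT/eqP] cz' cz cx; rewrite card_gt0 setD_eq0;
  apply: contra xz => sub; apply/eqP/val_inj/eqP;
  [rewrite eqEcard | rewrite eq_sym eqEcard]; rewrite sub; move: cx cz cz' => /=; lia.
Qed.

Lemma L2walk_setdist d x y : L2walk d x y -> setdist (val x) (val y) <= d.
Proof.
elim: d x => [x -> | d IH x [z [/L2adjP xz /IH zy]]]; first by rewrite setdistxx.
by have := L2adj_setdist (val y) xz; rewrite !(setdistC (val y)); lia.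
Qed.

Lemma L2walk_setdist_exists x y : L2walk (setdist (val x) (val y)) x y.
Proof.
move Exy: (setdist _ _) => d; elim: d x Exy => [|d IH] x Exy /=.
  by apply/val_inj/eqP; rewrite -setdist_eq0 Exy.
have xy : y != x by rewrite -(inj_eq val_inj) -setdist_eq0 setdistC Exy.
have [z] := exists_L2closer xy; rewrite inE => /andP [xz closer].
exists z; split; first exact/L2adjP.
apply: IH; have := L2adj_setdist (val y) xz; rewrite !(setdistC (val y)) in closer *.
by move: Exy closer => /=; lia.
Qed.

Lemma L2dist_isE x y d : L2dist_is x y d <-> d = setdist (val x) (val y).
Proof.
split=> [[walk shortest] | ->].
  have := L2walk_setdist walk; rewrite leq_eqVlt => /orP [/eqP // | lt].
  by case: (shortest _ lt); apply: L2walk_setdist_exists.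
by split=> [|d' lt /L2walk_setdist]; [apply: L2walk_setdist_exists | lia].
Qed.
End L2.

Section WeakEmbedding.
Variables (k n : nat) (f : L2 k -> L2 n).
Hypotheses (f_inj : injective f) (f_mono : forall x y, L2le x y -> L2le (f x) (f y)).
Implicit Types x y z w : L2 k.

Lemma f_proper x y : val x \proper val y -> val (f x) \proper val (f y).
Proof.
rewrite !properEneq => /andP [xy /f_mono fxy]; rewrite [_ \subset _]fxy andbT.
by apply: contra xy => /eqP/val_inj/f_inj ->.
Qed.

Lemma f_L2adjb x y : L2adjb x y -> L2adjb (f x) (f y).
Proof. by case/orP => /f_proper pr; apply/orP; [left | right]. Qed.

Lemma exists_L2adjb x : 0 < k -> exists w, L2adjb x w.
Proof.
(* every neighbour of x is closer to the complement of x *)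
move=> k0; suff /set0Pn [w] : L2closer (~: val x) x != set0.
  by rewrite inE => /andP [xw _]; exists w.
rewrite -card_gt0 card_L2closer //; have := L2_card x; rewrite (highlevS k0).
case: ifP => [/eqP cx _ | /negbT/eqP cx cx']; rewrite setDE ?setCK setIid.
  by have := cardsC (val x); have := lowlev_lt k0; rewrite card_ord; move: cx => /=; lia.
by move: cx cx' => /=; lia.
Qed.

Lemma L2_card_f x : 0 < k ->
  0 < n /\ #|val (f x)| + lowlev k = #|val x| + lowlev n.
Proof.
move=> k0; have [w /orP [] /[dup] pr /f_proper fpr] := exists_L2adjb x k0;
  have [_ c1 c2] := L2_proper_card pr; have [n0 c3 c4] := L2_proper_card fpr;
  move: c1 c2 c3 c4; rewrite (highlevS k0) (highlevS n0) => /=; lia.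
Qed.

Lemma card_L2closer_f x z : 0 < k ->
  setdist (val (f x)) (val (f z)) = setdist (val x) (val z) ->
  #|L2closer (val (f x)) (f z)| = #|L2closer (val x) z|.
Proof.
move=> k0 dist_f; have [n0 cx] := L2_card_f x k0; have [_ cz] := L2_card_f z k0.
have := setdist_cardD (val x) (val z); have := setdist_cardD (val z) (val x).
have := setdist_cardD (val (f x)) (val (f z)); have := setdist_cardD (val (f z)) (val (f x)).
rewrite !card_L2closer // !(setdistC (val z)) !(setdistC (val (f z))).
by move: dist_f cx cz => /=; case: ifP => /eqP; case: ifP => /eqP; lia.
Qed.

Lemma f_L2closer x z : 0 < k ->
  setdist (val (f x)) (val (f z)) = setdist (val x) (val z) ->
  {in L2closer (val x) z, forall w,
    setdist (val (f x)) (val (f w)) = setdist (val x) (val w)} ->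
  f @: L2closer (val x) z = L2closer (val (f x)) (f z).
Proof.
move=> k0 dist_fz dist_fw; apply/eqP.
rewrite eqEcard card_imset // card_L2closer_f // leqnn andbT.
apply/subsetP => _ /imsetP [w wC ->]; move: (wC); rewrite !inE dist_fz dist_fw //.
by case/andP => /f_L2adjb -> .
Qed.

Lemma setdist_f x y : setdist (val (f x)) (val (f y)) = setdist (val x) (val y).
Proof.
move Exy: (setdist _ (val y)) => d; elim/ltn_ind: d y Exy => d IH y Exy.
have [xy | xy] := eqVneq x y; first by rewrite -Exy xy !setdistxx.
have k0 := L2_neq_pos xy; have [z] := exists_L2closer xy; rewrite inE => /andP [yz closer].
have dist_fz : setdist (val (f x)) (val (f z)) = setdist (val x) (val z).
  by apply: IH => //; rewrite -Exy.
have : f y \notin L2closer (val (f x)) (f z).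
  rewrite -f_L2closer // => [|w]; last first.
    by rewrite inE => /andP [_ lt]; apply: IH => //; rewrite -Exy; apply: ltn_trans closer.
  by rewrite (mem_imset _ _ f_inj) inE L2adjbC yz /= -leqNgt ltnW.
rewrite inE L2adjbC f_L2adjb //= -leqNgt.
have := L2adj_setdist (val x) yz; have := L2adj_setdist (val (f x)) (f_L2adjb yz).
by move: Exy closer dist_fz => /=; lia.
Qed.
End WeakEmbedding.

Theorem mainTheorem8 (k n : nat) (f : L2 k -> L2 n) :
  weak_embedding f ->
  forall (x y : L2 k) (d : nat), L2dist_is x y d <-> L2dist_is (f x) (f y) d.
Proof. by case=> f_inj f_mono x y d; rewrite !L2dist_isE setdist_f. Qed.
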